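(* For every positive integer $t$, $r_t\ge\frac13$.
   Context: A voter matrix with $t$ topics is a matrix $V\in\{Y,N\}^{n\times t}$ for some positive integer $n$ (rows are voters), subject to the standing assumption that in every column the number of entries $Y$ is at least the number of entries $N$. $\mathcal{V}_t$ is the set of all voter matrices with $t$ topics and any number of voters. A proposal is a vector $p\in\{Y,N\}^t$. A voter $v$ supports $p$ if the Hamming distance between $v$ and $p$ is at most $t/2$; $p$ is supported by $V$ if at least $n/2$ rows of $V$ support $p$. For $i=1,\dots,t$ let $m_i$ be the fraction of entries $Y$ in column $i$ of $V$, and $m_V=\frac1t\sum_i m_i$. For a proposal $p$ let $m_i'=m_i$ if $p_i=Y$ and $m_i'=1-m_i$ if $p_i=N$; set $R_p=\frac1t\sum_i m_i'$ and $r_p=R_p/m_V$. Let $r_V=\max r_p$ over all proposals $p$ supported by $V$, and $r_t=\inf_{V\in\mathcal{V}_t} r_V$. *)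

From HB Require Import structures.
From mathcomp Require Import all_boot all_order all_algebra.
From mathcomp Require Import boolp classical_sets reals.
Set Implicit Arguments. Unset Strict Implicit. Unset Printing Implicit Defensive.
Import Order.TTheory GRing.Theory Num.Theory.
Local Open Scope ring_scope.
Local Open Scope classical_set_scope.

(* Entries: true = Y, false = N.  Rows = voters, columns = topics. *)
Definition voter_matrix (n t : nat) (V : 'M[bool]_(n, t)) : Prop :=
  (0 < n)%N /\
  forall j : 'I_t, (#|[set i | ~~ V i j]| <= #|[set i | V i j]|)%N.

Definition proposal (t : nat) := {ffun 'I_t -> bool}.

Definition hamming (n t : nat) (V : 'M[bool]_(n, t)) (i : 'I_n) (p : proposal t) : nat :=
  #|[set j : 'I_t | V i j != p j]|.

Definition supports (n t : nat) (V : 'M[bool]_(n, t)) (i : 'I_n) (p : proposal t) : bool :=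
  (2 * hamming V i p <= t)%N.

Definition supported (n t : nat) (V : 'M[bool]_(n, t)) (p : proposal t) : bool :=
  (n <= 2 * #|[set i | supports V i p]|)%N.

Section Ratios.
Variable R : realType.

Definition mcol (n t : nat) (V : 'M[bool]_(n, t)) (j : 'I_t) : R :=
  (#|[set i | V i j]|)%:R / n%:R.

Definition mV (n t : nat) (V : 'M[bool]_(n, t)) : R :=
  (t%:R)^-1 * \sum_(j < t) mcol V j.

Definition mcol' (n t : nat) (V : 'M[bool]_(n, t)) (p : proposal t) (j : 'I_t) : R :=
  if p j then mcol V j else 1 - mcol V j.

Definition Rp (n t : nat) (V : 'M[bool]_(n, t)) (p : proposal t) : R :=
  (t%:R)^-1 * \sum_(j < t) mcol' V p j.

Definition rp (n t : nat) (V : 'M[bool]_(n, t)) (p : proposal t) : R :=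
  Rp V p / mV V.

(* r_V = max of r_p over supported proposals (0 if there were none;
   all r_p are >= 0, so this does not affect the max otherwise). *)
Definition rV (n t : nat) (V : 'M[bool]_(n, t)) : R :=
  \big[Order.max/0]_(p : proposal t | supported V p) rp V p.

Definition rt (t : nat) : R :=
  inf [set x : R | exists n : nat, exists V : 'M[bool]_(n, t),
                     voter_matrix V /\ x = rV V].
End Ratios.

(* Write [mass] for the sum of the column fractions m_j and [score p] for the
   sum of the m_j', so that r_p = score p / mass, with t/2 <= mass <= t because
   every m_j lies in [1/2, 1].  Complementing a proposal turns its score s into
   t - s, and since every voter supports p or its complement, one of the two is
   supported.  It therefore suffices to find p with mass/3 <= score p <=
   t - mass/3.  Walking through the proposals Y..YN..N with k leading Y's, the
   score climbs from t - mass to mass by steps 2 m_k - 1 <= 1; for t >= 3 the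
   target window has width at least t/3 >= 1, so the walk lands in it.  The
   cases t = 2 (take YN) and t = 1 (the all-Y proposal is supported) are
   checked directly. *)
From HB Require Import structures.
From mathcomp Require Import all_boot all_order all_algebra.
From mathcomp Require Import boolp classical_sets reals.
From mathcomp Require Import zify ring lra.
Import Order.TTheory GRing.Theory Num.Theory.
Local Open Scope ring_scope.

Lemma discrete_ivt (R : realDomainType) (f : nat -> R) (a b d : R) (t : nat) :
  (forall k, (k < t)%N -> f k.+1 <= f k + d) -> a + d <= b ->
  f 0%N <= b -> a <= f t -> exists2 k, (k <= t)%N & a <= f k <= b.
Proof.
move=> fS adb f0b; elim: t fS => [|t IHt] fS aft; first by exists 0%N; rewrite // aft f0b.
have [aft'|ftlt] := lerP a (f t).
  have [k kt akb] := IHt (fun k kt => fS k (ltnW kt)) aft'.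
  by exists k => //; exact: leqW.
exists t.+1 => //; rewrite aft /=.
by apply: le_trans (fS t (ltnSn t)) _; apply: le_trans adb; rewrite lerD2r ltW.
Qed.

Lemma card_mkset (T : finType) (P : pred T) :
  #|mem (mkset (fun x => is_true (P x)))| = #|[set x | P x]|.
Proof. by apply: eq_card => x; rewrite inE; apply/idP/idP; rewrite in_setE. Qed.

Section VoterMatrix.
Variables (R : realType) (n t : nat) (V : 'M[bool]_(n, t)).

Definition pcompl (p : proposal t) : proposal t := [ffun j => ~~ p j].

Definition prefix_proposal (k : nat) : proposal t := [ffun j : 'I_t => (j < k)%N].

Definition mass : R := \sum_(j < t) mcol R V j.

Definition score (p : proposal t) : R := \sum_(j < t) mcol' R V p j.

Lemma hamming_pcompl i p : (hamming V i p + hamming V i (pcompl p))%N = t.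
Proof.
rewrite /hamming !card_mkset -[RHS]card_ord -(cardsC [set j | V i j != p j]).
by congr (_ + _)%N; apply: eq_card => j; rewrite !inE ffunE; case: (V i j) (p j) => [] [].
Qed.

Lemma supported_pcompl p : supported V p || supported V (pcompl p).
Proof.
rewrite /supported !card_mkset.
suff : (n <= #|[set i | supports V i p]| + #|[set i | supports V i (pcompl p)]|)%N.
  by move=> ?; apply/orP; lia.
apply: leq_trans (leq_card_setU _ _).1.
rewrite -[X in (X <= _)%N]card_ord -cardsT; apply: subset_leq_card.
apply/fintype.subsetP => i _; rewrite !inE /supports.
by have := hamming_pcompl i p; lia.
Qed.

Lemma mcol'_pcompl p j : mcol' R V (pcompl p) j = 1 - mcol' R V p j.
Proof. by rewrite /mcol' ffunE; case: (p j) => /=; ring. Qed.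

Lemma score_pcompl p : score (pcompl p) = t%:R - score p.
Proof.
rewrite /score (eq_bigr _ (fun j _ => mcol'_pcompl p j)).
by rewrite sumrB sumr_const card_ord.
Qed.

Lemma score_prefix0 : score (prefix_proposal 0%N) = t%:R - mass.
Proof.
transitivity (\sum_(j < t) (1 - mcol R V j)).
  by apply: eq_bigr => j _; rewrite /mcol' ffunE.
by rewrite sumrB sumr_const card_ord.
Qed.

Lemma score_prefix_all : score (prefix_proposal t) = mass.
Proof. by apply: eq_bigr => j _; rewrite /mcol' ffunE ltn_ord. Qed.

Lemma score_prefixS (k : 'I_t) :
  score (prefix_proposal k.+1) = score (prefix_proposal k) + 2 * mcol R V k - 1.
Proof.
rewrite /score (bigD1 k) //= [X in _ = X + _ - _](bigD1 k) //=.
rewrite /mcol' !ffunE ltnSn ltnn.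
under eq_bigr => j jk do rewrite !ffunE ltnS leq_eqVlt val_eqE (negbTE jk) /=.
under [in RHS]eq_bigr => j _ do rewrite ffunE.
by ring.
Qed.

Hypothesis HV : voter_matrix V.

Lemma voter_matrix_col_majority j : (n <= 2 * #|[set i | V i j]|)%N.
Proof.
have := HV.2 j; rewrite !card_mkset.
have := cardsC [set i | V i j]; rewrite card_ord.
have -> : ~: [set i | V i j] = [set i | ~~ V i j] by apply/setP => i; rewrite !inE.
lia.
Qed.

Lemma mcol_bounds j : 2^-1 <= mcol R V j <= 1.
Proof.
have n_gt0 : (0 : R) < n%:R by rewrite ltr0n HV.1.
have cn : (#|[set i | V i j]| <= n)%N by rewrite -[X in (_ <= X)%N]card_ord max_card.
rewrite /mcol card_mkset ler_pdivlMr // ler_pdivrMr // mul1r ler_nat cn andbT.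
have := voter_matrix_col_majority j; rewrite -(ler_nat R) natrM; lra.
Qed.

Lemma mass_bounds : t%:R / 2 <= mass <= t%:R.
Proof.
have -> : t%:R / 2 = \sum_(j < t) (2^-1 : R) by rewrite sumr_const card_ord mulr_natl.
have -> : t%:R = \sum_(j < t) (1 : R) by rewrite sumr_const card_ord.
by apply/andP; split; apply: ler_sum => j _; case/andP: (mcol_bounds j).
Qed.

Lemma mass_gt0 : (0 < t)%N -> 0 < mass.
Proof.
move=> t_gt0; have /andP[+ _] := mass_bounds; apply: lt_le_trans.
by rewrite divr_gt0 ?ltr0n.
Qed.

Definition balanced (p : proposal t) := mass / 3 <= score p <= t%:R - mass / 3.

Lemma balanced_prefix1 : t = 2%N -> balanced (prefix_proposal 1%N).
Proof.
move=> t2; have t_gt1 : (1 < t)%N by rewrite t2.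
pose j0 : 'I_t := Ordinal (ltnW t_gt1); pose j1 : 'I_t := Ordinal t_gt1.
have S0 := score_prefixS j0; have S1 := score_prefixS j1; rewrite /= in S0 S1.
have P0 := score_prefix0.
have P2 : score (prefix_proposal 2%N) = mass by rewrite -t2 score_prefix_all.
have tR : t%:R = 2 :> R by rewrite t2.
have /andP[? ?] := mcol_bounds j0; have /andP[? ?] := mcol_bounds j1.
by apply/andP; split; lra.
Qed.

Lemma exists_balanced_prefix : (3 <= t)%N -> exists p, balanced p.
Proof.
move=> t_ge3; have /andP[mass_ge mass_le] := mass_bounds.
have t3 : (3 : R) <= t%:R by rewrite (ler_nat R 3).
have [k _ ?] : exists2 k, (k <= t)%N & balanced (prefix_proposal k).
  apply: (@discrete_ivt R (fun k => score (prefix_proposal k)) _ _ 1).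
  - move=> k kt; rewrite (score_prefixS (Ordinal kt)) /= -addrA lerD2l.
    by case/andP: (mcol_bounds (Ordinal kt)); lra.
  - by lra.
  - by rewrite score_prefix0; lra.
  - by rewrite score_prefix_all; lra.
by exists (prefix_proposal k).
Qed.

Lemma supported_prefix_t1 : t = 1%N -> supported V (prefix_proposal t).
Proof.
move=> t1; have t_gt0 : (0 < t)%N by rewrite t1.
pose j0 : 'I_t := Ordinal t_gt0.
rewrite /supported card_mkset; apply: leq_trans (voter_matrix_col_majority j0) _.
rewrite leq_mul2l /=; apply: subset_leq_card; apply/fintype.subsetP => i; rewrite !inE => Vij0.
rewrite /supports /hamming card_mkset.
suff -> : [set j | V i j != prefix_proposal t j] = finset.set0 by rewrite cards0.
apply/setP => j; rewrite !inE ffunE ltn_ord.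
have -> : j = j0 by apply: val_inj => /=; have := ltn_ord j; lia.
by rewrite Vij0.
Qed.

Lemma exists_supported_score : (0 < t)%N ->
  exists2 p, supported V p & mass / 3 <= score p.
Proof.
move=> t_gt0; have mass_pos := mass_gt0 t_gt0.
have [t1|t_ne1] := eqVneq t 1%N.
  exists (prefix_proposal t); first exact: supported_prefix_t1.
  by rewrite score_prefix_all; lra.
have [p /andP[lo hi]] : exists p, balanced p.
  have [t2|t_ne2] := eqVneq t 2%N; first by exists (prefix_proposal 1%N); exact: balanced_prefix1.
  by apply: exists_balanced_prefix; lia.
have [pS|pcS] := orP (supported_pcompl p); first by exists p.
by exists (pcompl p); rewrite // score_pcompl; lra.
Qed.

Lemma rpE p : (0 < t)%N -> rp R V p = score p / mass.
Proof.
move=> t_gt0; rewrite /rp /Rp /mV -/mass -/(score p).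
by field; rewrite pnatr_eq0 -lt0n t_gt0 gt_eqF // mass_gt0.
Qed.

Lemma rV_ge_third : (0 < t)%N -> 3%:R^-1 <= rV R V.
Proof.
move=> t_gt0; have [p pS score_ge] := exists_supported_score t_gt0.
apply: le_trans (le_bigmax_cond _ _ pS).
by rewrite rpE // ler_pdivlMr ?mass_gt0 //; lra.
Qed.

End VoterMatrix.

Lemma voter_matrix_const_true t : voter_matrix (const_mx true : 'M[bool]_(1, t)).
Proof.
split=> // j; rewrite !card_mkset; apply: subset_leq_card.
by apply/fintype.subsetP => i; rewrite !inE mxE.
Qed.

Theorem corollary5p4 (R : realType) (t : nat) :
  (0 < t)%N -> 3%:R^-1 <= rt R t.
Proof.
move=> t_gt0; apply: lb_le_inf.
  by exists (rV R (const_mx true : 'M[bool]_(1, t))), 1%N, (const_mx true); split;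
    first exact: voter_matrix_const_true.
by move=> _ [n [V [HV ->]]]; exact: rV_ge_third.
Qed.
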